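(* Let $H$ be a $k$-linear semi-Hopf category, $A$ a right $H$-comodule category and $B=A^{{\rm co}H}$. For $x,y,z\in X$ let ${\rm can}'^{y}_{zx}:A_{zx}\otimes_{B_x}A_{xy}\to A_{zy}\otimes H_{zx}$, ${\rm can}'^{y}_{zx}(a\otimes_{B_x}a')=a_{[0]}a'\otimes a_{[1]}$. The following are equivalent: (1) ${\rm can}'^{y}_{zx}$ is bijective for all $x,y,z\in X$; (2) for all $x,z\in X$, ${\rm can}'^{z}_{zx}$ is bijective and ${\rm can}'^{x}_{zx}$ has a left inverse; (3) for all $x,z\in X$ there is a $k$-linear map $\gamma'_{zx}:H_{zx}\to A_{zx}\otimes_{B_x}A_{xz}$, $\gamma'_{zx}(h)=\sum_i l'_i(h)\otimes_{B_x}r'_i(h)$, such that for all $h\in H_{zx}$ and $a\in A_{zx}$: $$\sum_i l'_i(h)_{[0]}r'_i(h)\otimes l'_i(h)_{[1]}=1_z\otimes h,\qquad\sum_i l'_i(a_{[1]})\otimes_{B_x}r'_i(a_{[1]})a_{[0]}=a\otimes_{B_x}1_x.$$ (When these hold, $A$ is called an $H$-Galois' category extension of $B$.)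
   Context: Let $k$ be a commutative ring; unadorned $\otimes$ is over $k$. A $k$-linear category $A$ with class of objects $X$ consists of $k$-modules $A_{xy}$, associative compositions $A_{xy}\otimes A_{yz}\to A_{xz}$, $a\otimes b\mapsto ab$, and units $1_x\in A_{xx}$. A $k$-linear semi-Hopf category $H$ (objects $X$) is a $k$-linear category in which each $H_{xy}$ is a $k$-coalgebra with $\Delta_{xy}(h)=h_{(1)}\otimes h_{(2)}$ and counit $\varepsilon_{xy}$, such that $\Delta_{xz}(hh')=h_{(1)}h'_{(1)}\otimes h_{(2)}h'_{(2)}$, $\Delta_{xx}(1_x)=1_x\otimes1_x$, $\varepsilon_{xz}(hh')=\varepsilon_{xy}(h)\varepsilon_{yz}(h')$, $\varepsilon_{xx}(1_x)=1$. A right $H$-comodule category is a $k$-linear category $A$ with objects $X$ such that each $A_{xy}$ is a right $H_{xy}$-comodule, $\rho_{xy}(a)=a_{[0]}\otimes a_{[1]}$, with $\rho_{xz}(ab)=a_{[0]}b_{[0]}\otimes a_{[1]}b_{[1]}$ and $\rho_{xx}(1_x)=1_x\otimes1_x$. Its coinvariants are the $k$-algebras $B_x=\{a\in A_{xx}\mid\rho_{xx}(a)=a\otimes1_x\}$; $A_{xy}$ is a $B_x$-$B_y$-bimodule by multiplication. *)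

From HB Require Import structures.
From mathcomp Require Import all_boot all_order all_algebra.
From mathcomp Require Import generic_quotient.
From Stdlib Require Import ClassicalEpsilon.
Set Implicit Arguments. Unset Strict Implicit. Unset Printing Implicit Defensive.
Import GRing.Theory.
Local Open Scope ring_scope.
Local Open Scope quotient_scope.

Section Tensor.
Variables (k : comPzRingType) (U V : lmodType k) (I : Type)
  (bl : I -> U -> U) (br : I -> V -> V).

Definition bal_bilinear (W : lmodType k) (f : U -> V -> W) : Prop :=
  [/\ (forall a u u' v, f (a *: u + u') v = a *: f u v + f u' v),
      (forall a u v v', f u (a *: v + v') = a *: f u v + f u v') &
      (forall i u v, f (bl i u) v = f u (br i v))].

Definition fsum (W : lmodType k) (f : U -> V -> W) (s : seq (U * V)) : W :=
  \sum_(p <- s) f p.1 p.2.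

Definition tens_rel (s t : seq (U * V)) : Prop :=
  forall (W : lmodType k) (f : U -> V -> W), bal_bilinear f -> fsum f s = fsum f t.

Definition trel (s t : seq (U * V)) : bool :=
  if excluded_middle_informative (tens_rel s t) then true else false.

Lemma trelP s t : reflect (tens_rel s t) (trel s t).
Proof. by rewrite /trel; case: excluded_middle_informative => H; constructor. Qed.

Lemma trel_refl : reflexive trel.
Proof. by move=> s; apply/trelP. Qed.
Lemma trel_sym : symmetric trel.
Proof.
by move=> s t; apply/trelP/trelP => H W f Hf; rewrite H.
Qed.
Lemma trel_trans : transitive trel.
Proof.
by move=> t s u /trelP H1 /trelP H2; apply/trelP => W f Hf; rewrite H1 ?H2.
Qed.

Canonical trel_equiv := EquivRel trel trel_refl trel_sym trel_trans.

Definition tensor := {eq_quot trel}.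
HB.instance Definition _ : EqQuotient _ trel tensor := EqQuotient.on tensor.
HB.instance Definition _ := Choice.on tensor.

Lemma fsum_repr (W : lmodType k) (f : U -> V -> W) s :
  bal_bilinear f -> fsum f (repr (\pi_tensor s)) = fsum f s.
Proof.
move=> Hf; have /eqquotP/trelP H : repr (\pi_tensor s) = s %[mod tensor].
  by rewrite reprK.
exact: H.
Qed.

Lemma fsum_cat (W : lmodType k) (f : U -> V -> W) s t :
  fsum f (s ++ t) = fsum f s + fsum f t.
Proof. by rewrite /fsum big_cat. Qed.

Definition tzero : tensor := \pi_tensor [::].
Definition tadd (x y : tensor) : tensor := \pi_tensor (repr x ++ repr y).
Definition topp (x : tensor) : tensor :=
  \pi_tensor (map (fun p => (- p.1, p.2)) (repr x)).
Definition tscale (a : k) (x : tensor) : tensor :=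
  \pi_tensor (map (fun p => (a *: p.1, p.2)) (repr x)).

Section BalLemmas.
Variables (W : lmodType k) (f : U -> V -> W).
Hypothesis Hf : bal_bilinear f.
Lemma bb0l v : f 0 v = 0.
Proof.
case: Hf => H1 _ _; have := H1 1 0 0 v; rewrite !scale1r addr0 => H.
by apply: (addrI (f 0 v)); rewrite -H addr0.
Qed.
Lemma bbZl a u v : f (a *: u) v = a *: f u v.
Proof. by case: Hf => H1 _ _; have := H1 a u 0 v; rewrite addr0 bb0l addr0. Qed.
Lemma bbDl u u' v : f (u + u') v = f u v + f u' v.
Proof. by case: Hf => H1 _ _; have := H1 1 u u' v; rewrite !scale1r. Qed.
Lemma bbNl u v : f (- u) v = - f u v.
Proof. by rewrite -scaleN1r bbZl scaleN1r. Qed.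
End BalLemmas.

Lemma fsum_map_scale (W : lmodType k) (f : U -> V -> W) a s :
  bal_bilinear f -> fsum f (map (fun p => (a *: p.1, p.2)) s) = a *: fsum f s.
Proof.
move=> Hf; rewrite /fsum big_map scaler_sumr; apply: eq_bigr => p _ /=.
exact: bbZl.
Qed.

Lemma fsum_map_opp (W : lmodType k) (f : U -> V -> W) s :
  bal_bilinear f -> fsum f (map (fun p => (- p.1, p.2)) s) = - fsum f s.
Proof.
move=> Hf; rewrite /fsum big_map -sumrN; apply: eq_bigr => p _ /=.
exact: bbNl.
Qed.

Ltac teq := apply/eqquotP/trelP => W f Hf;
  rewrite ?(fsum_cat, fsum_repr, fsum_map_scale, fsum_map_opp, fsum_repr) //.

Lemma taddA : associative tadd.
Proof.
move=> x y z; rewrite /tadd; teq.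
by rewrite addrA.
Qed.
Lemma taddC : commutative tadd.
Proof. by move=> x y; rewrite /tadd; teq; rewrite addrC. Qed.
Lemma tadd0 : left_id tzero tadd.
Proof.
move=> x; rewrite /tadd /tzero -[RHS]reprK; teq.
by rewrite /fsum big_nil add0r.
Qed.
Lemma taddN : left_inverse tzero topp tadd.
Proof.
move=> x; rewrite /tadd /topp /tzero; teq.
by rewrite ?(fsum_map_opp, fsum_repr) // addNr /fsum big_nil.
Qed.

HB.instance Definition _ := GRing.isZmodule.Build tensor taddA taddC tadd0 taddN.

Lemma tscaleA a b x : tscale a (tscale b x) = tscale (a * b) x.
Proof.
rewrite /tscale; teq; by rewrite ?(fsum_map_scale, fsum_repr) // scalerA.
Qed.
Lemma tscale1 : left_id 1 tscale.
Proof.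
move=> x; rewrite /tscale -[RHS]reprK; teq.
by rewrite scale1r.
Qed.
Lemma tscaleDr : right_distributive tscale +%R.
Proof.
move=> a x y; rewrite /tscale /GRing.add /= /tadd; teq.
by rewrite ?(fsum_map_scale, fsum_cat, fsum_repr) // scalerDr.
Qed.
Lemma tscaleDl x : {morph tscale^~ x : a b / a + b}.
Proof.
move=> a b; rewrite /tscale /GRing.add /= /tadd; teq.
by rewrite ?(fsum_map_scale, fsum_cat, fsum_repr) // scalerDl.
Qed.

HB.instance Definition _ :=
  GRing.Zmodule_isLmodule.Build k tensor tscaleA tscale1 tscaleDr tscaleDl.

Definition tmul (u : U) (v : V) : tensor := \pi_tensor [:: (u, v)].
Definition tlift (W : lmodType k) (f : U -> V -> W) (t : tensor) : W :=
  fsum f (repr t).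

End Tensor.

Arguments tensor {k} U V {I} bl br.
Arguments tmul {k U V I bl br} u v.
Arguments tlift {k U V I bl br W} f t.

(* Tensor product over k : no balancing condition beyond k-bilinearity.     *)
Definition ktensor (k : comPzRingType) (U V : lmodType k) : lmodType k :=
  tensor U V (fun (_ : unit) (u : U) => u) (fun (_ : unit) (v : V) => v).
Definition ktmul (k : comPzRingType) (U V : lmodType k) (u : U) (v : V)
  : ktensor U V := tmul u v.
Arguments ktmul {k U V} u v.

(* kcomp a b = "ab" for a in A_xy, b in A_yz (so ab in A_xz).                *)
Record kcat (k : comPzRingType) (X : Type) := KCat {
  hom :> X -> X -> lmodType k;
  kcomp : forall x y z : X, hom x y -> hom y z -> hom x z;
  idm : forall x : X, hom x x;
  comp_linl : forall x y z (c : k) (a a' : hom x y) (b : hom y z),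
    kcomp (c *: a + a') b = c *: kcomp a b + kcomp a' b;
  comp_linr : forall x y z (c : k) (a : hom x y) (b b' : hom y z),
    kcomp a (c *: b + b') = c *: kcomp a b + kcomp a b';
  compA : forall x y z w (a : hom x y) (b : hom y z) (c : hom z w),
    kcomp (kcomp a b) c = kcomp a (kcomp b c);
  comp1l : forall x y (a : hom x y), kcomp (idm x) a = a;
  comp1r : forall x y (a : hom x y), kcomp a (idm y) = a
}.
Arguments kcomp {k X} _ {x y z} _ _.
Arguments idm {k X} _ _.

(* Sweedler notation  sum f(h_(1), h_(2))  is  tlift f (cop h).             *)
Record semiHopfCat (k : comPzRingType) (X : Type) := SemiHopfCat {
  hcat :> kcat k X;
  cop : forall x y : X, hcat x y -> ktensor (hcat x y) (hcat x y);
  cou : forall x y : X, hcat x y -> k;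
  cop_lin : forall x y (c : k) (h h' : hcat x y),
    cop (c *: h + h') = c *: cop h + cop h';
  cou_lin : forall x y (c : k) (h h' : hcat x y),
    cou (c *: h + h') = c * cou h + cou h';
  coassoc : forall x y (h : hcat x y),
    tlift (fun h1 h2 => tlift (fun h11 h12 => ktmul h11 (ktmul h12 h2)) (cop h1))
          (cop h)
    = tlift (fun h1 h2 => ktmul h1 (cop h2)) (cop h);
  counitl : forall x y (h : hcat x y), tlift (fun h1 h2 => cou h1 *: h2) (cop h) = h;
  counitr : forall x y (h : hcat x y), tlift (fun h1 h2 => cou h2 *: h1) (cop h) = h;
  cop_comp : forall x y z (h : hcat x y) (h' : hcat y z),
    cop (kcomp hcat h h')
    = tlift (fun h1 h2 => tlift (fun h1' h2' =>
                 ktmul (kcomp hcat h1 h1') (kcomp hcat h2 h2')) (cop h')) (cop h);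
  cop_id : forall x, cop (idm hcat x) = ktmul (idm hcat x) (idm hcat x);
  cou_comp : forall x y z (h : hcat x y) (h' : hcat y z),
    cou (kcomp hcat h h') = cou h * cou h';
  cou_id : forall x, cou (idm hcat x) = 1
}.
Arguments cop {k X} _ {x y} _.
Arguments cou {k X} _ {x y} _.

Record comodCat (k : comPzRingType) (X : Type) (H : semiHopfCat k X) := ComodCat {
  acat :> kcat k X;
  rho : forall x y : X, acat x y -> ktensor (acat x y) (H x y);
  rho_lin : forall x y (c : k) (a a' : acat x y),
    rho (c *: a + a') = c *: rho a + rho a';
  rho_coassoc : forall x y (a : acat x y),
    tlift (fun a0 a1 => tlift (fun a00 a01 => ktmul a00 (ktmul a01 a1)) (rho a0))
          (rho a)
    = tlift (fun a0 a1 => ktmul a0 (cop H a1)) (rho a);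
  rho_counit : forall x y (a : acat x y),
    tlift (fun a0 a1 => cou H a1 *: a0) (rho a) = a;
  rho_comp : forall x y z (a : acat x y) (b : acat y z),
    rho (kcomp acat a b)
    = tlift (fun a0 a1 => tlift (fun b0 b1 =>
                 ktmul (kcomp acat a0 b0) (kcomp H a1 b1)) (rho b)) (rho a);
  rho_id : forall x, rho (idm acat x) = ktmul (idm acat x) (idm H x)
}.
Arguments rho {k X H} _ {x y} _.

Definition coinv (k : comPzRingType) (X : Type) (H : semiHopfCat k X)
  (A : comodCat H) (x : X) (b : A x x) : Prop :=
  rho A b = ktmul b (idm H x).

Definition btensor (k : comPzRingType) (X : Type) (H : semiHopfCat k X)
  (A : comodCat H) (z x y : X) : lmodType k :=
  tensor (A z x) (A x y)
    (fun (b : {b : A x x | @coinv k X H A x b}) (a : A z x) => kcomp A a (proj1_sig b))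
    (fun (b : {b : A x x | @coinv k X H A x b}) (a' : A x y) => kcomp A (proj1_sig b) a').

Definition btmul (k : comPzRingType) (X : Type) (H : semiHopfCat k X)
  (A : comodCat H) (z x y : X) (a : A z x) (a' : A x y) : btensor A z x y :=
  tmul a a'.
Arguments btmul {k X H A z x y} a a'.

Definition canp (k : comPzRingType) (X : Type) (H : semiHopfCat k X)
  (A : comodCat H) (z x y : X) (t : btensor A z x y) : ktensor (A z y) (H z x) :=
  tlift (fun (a : A z x) (a' : A x y) =>
           tlift (fun (a0 : A z x) (a1 : H z x) => ktmul (kcomp A a0 a') a1) (rho A a))
        t.
Arguments canp {k X H} A z x y _.
Arguments btensor {k X H} A z x y.
Arguments coinv {k X H} A {x} _.

From Pilot Require Import Defs.
From HB Require Import structures.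
From mathcomp Require Import all_boot all_order all_algebra.
From mathcomp Require Import generic_quotient.
Set Implicit Arguments. Unset Strict Implicit. Unset Printing Implicit Defensive.
Import GRing.Theory.
Local Open Scope ring_scope.

(* A_zx (x)_{B_x} A_xw and A_zw (x) H_zx both carry a right action of A_wy by
   multiplication on the A-factor adjacent to w, and can' is equivariant for
   it: can'(t . c) = can'(t) . c.  Since every element a (x) h of
   A_zy (x) H_zx is (1_z (x) h) . a, the map can'^y_{zx} is determined by
   can'^z_{zx}; a translation map gamma' with can'(gamma'(h)) = 1_z (x) h then
   yields the inverse  a (x) h |-> gamma'(h) . a  of every can'^y_{zx}.
   Conversely gamma' := (can'^z_{zx})^{-1}(1_z (x) -), and the second identity
   of (3) holds because both sides have image a_[0] (x) a_[1] = can'(a (x) 1_x)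
   under the injective map can'^x_{zx}. *)

Section BalancedTensor.
Variables (k : comPzRingType) (U V : lmodType k) (I : Type)
  (bl : I -> U -> U) (br : I -> V -> V).
Local Notation T := (tensor U V bl br).

Lemma tensor_ext (t t' : T) :
  (forall (W : lmodType k) (f : U -> V -> W), bal_bilinear bl br f ->
     tlift f t = tlift f t') -> t = t'.
Proof.
by move=> E; rewrite -[t]reprK -[t']reprK; apply/eqquotP/trelP => W f /E.
Qed.

Lemma eq_tlift (W : lmodType k) (f f' : U -> V -> W) (t : T) :
  (forall u v, f u v = f' u v) -> tlift f t = tlift f' t.
Proof. by move=> E; apply: eq_bigr => p _; rewrite E. Qed.

Lemma tlift_linear_fun (W : lmodType k) (c : k) (f f' : U -> V -> W) (t : T) :
  tlift (fun u v => c *: f u v + f' u v) t = c *: tlift f t + tlift f' t.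
Proof. by rewrite /tlift /fsum big_split /= scaler_sumr. Qed.

Lemma tlift_comp (W W' : lmodType k) (g : W -> W') : linear g ->
  forall (f : U -> V -> W) (t : T), g (tlift f t) = tlift (fun u v => g (f u v)) t.
Proof.
move=> /GRing.semilinear_linear/GRing.nmod_morphism_semilinear [g0 gD] f t.
rewrite /tlift /fsum; elim: (repr t) => [|p s IHs]; first by rewrite !big_nil.
by rewrite !big_cons gD IHs.
Qed.

Section BalancedLift.
Variables (W : lmodType k) (f : U -> V -> W).
Hypothesis f_bal : bal_bilinear bl br f.

Lemma tlift_tmul u v : tlift f (tmul u v : T) = f u v.
Proof. by rewrite /tlift /tmul fsum_repr // /fsum big_seq1. Qed.

Lemma tlift_is_linear : linear (tlift f : T -> W).
Proof.
move=> c t t'; rewrite /tlift {1}/GRing.add {1}/GRing.scale /= /tadd /tscale.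
by rewrite fsum_repr // fsum_cat fsum_repr // (fsum_map_scale _ _ f_bal).
Qed.

End BalancedLift.

Lemma bal_bilinear_tmul : bal_bilinear bl br (fun u v => tmul u v : T).
Proof.
have lin := tlift_is_linear.
split=> [a u u' v|a u v v'|i u v]; apply: tensor_ext => W f f_bal;
  rewrite ?lin // !tlift_tmul //; by case: f_bal.
Qed.

Lemma tmulDl a u u' v : (tmul (a *: u + u') v : T) = a *: tmul u v + tmul u' v.
Proof. by case: bal_bilinear_tmul. Qed.

Lemma tmulDr a u v v' : (tmul u (a *: v + v') : T) = a *: tmul u v + tmul u v'.
Proof. by case: bal_bilinear_tmul. Qed.

Lemma tmul_balanced i u v : (tmul (bl i u) v : T) = tmul u (br i v).
Proof. by case: bal_bilinear_tmul. Qed.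

Lemma tlift_tmul_id (t : T) : tlift (fun u v => tmul u v : T) t = t.
Proof.
apply: tensor_ext => W f f_bal; rewrite (tlift_comp (tlift_is_linear f_bal)).
by apply: eq_tlift => u v; rewrite tlift_tmul.
Qed.

End BalancedTensor.

Lemma bilinear_bal (k : comPzRingType) (U V W : lmodType k) (f : U -> V -> W) :
  (forall a u u' v, f (a *: u + u') v = a *: f u v + f u' v) ->
  (forall a u v v', f u (a *: v + v') = a *: f u v + f u v') ->
  bal_bilinear (fun (_ : unit) (u : U) => u) (fun (_ : unit) (v : V) => v) f.
Proof. by split. Qed.

Section GaloisMap.
Variables (k : comPzRingType) (X : Type) (H : semiHopfCat k X) (A : comodCat H).

Local Notation balanced z x y f :=
  (bal_bilinear
     (fun (b : {b : A x x | coinv A b}) (a : A z x) => kcomp A a (proj1_sig b))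
     (fun (b : {b : A x x | coinv A b}) (a' : A x y) => kcomp A (proj1_sig b) a')
     f).

Lemma ktmulDl (U V : lmodType k) a (u u' : U) (v : V) :
  ktmul (a *: u + u') v = a *: ktmul u v + ktmul u' v.
Proof. exact: tmulDl. Qed.

Lemma ktmulDr (U V : lmodType k) a (u : U) (v v' : V) :
  ktmul u (a *: v + v') = a *: ktmul u v + ktmul u v'.
Proof. exact: tmulDr. Qed.

Section RightActions.
Variables (z x w y : X) (c : A w y).

Definition kract (t : ktensor (A z w) (H z x)) : ktensor (A z y) (H z x) :=
  tlift (fun b h => ktmul (kcomp A b c) h) t.

Definition bract (t : btensor A z x w) : btensor A z x y :=
  tlift (fun l r => btmul l (kcomp A r c)) t.

Lemma kract_bal :
  bal_bilinear (fun (_ : unit) (b : A z w) => b) (fun (_ : unit) (h : H z x) => h)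
    (fun b h => ktmul (kcomp A b c) h).
Proof. by apply: bilinear_bal => *; rewrite ?comp_linl ?ktmulDl ?ktmulDr. Qed.

Lemma bract_bal : balanced z x w (fun l r => btmul l (kcomp A r c)).
Proof.
split=> [a l l' r|a l r r'|i l r]; rewrite /btmul ?comp_linl; first exact: tmulDl.
  exact: tmulDr.
by rewrite (@Defs.compA _ _ (acat A)); apply: tmul_balanced.
Qed.

Lemma kract_linear : linear kract.
Proof. exact: tlift_is_linear kract_bal. Qed.

Lemma bract_linear : linear bract.
Proof. exact: tlift_is_linear bract_bal. Qed.

Lemma kract_tmul b h : kract (ktmul b h) = ktmul (kcomp A b c) h.
Proof. exact: tlift_tmul kract_bal _ _. Qed.

Lemma bract_tmul l r : bract (btmul l r) = btmul l (kcomp A r c).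
Proof. exact: tlift_tmul bract_bal _ _. Qed.

End RightActions.

Lemma kractM z x w y v (c : A w y) (c' : A y v) (t : ktensor (A z w) (H z x)) :
  kract c' (kract c t) = kract (kcomp A c c') t.
Proof.
rewrite [kract c t]/kract (tlift_comp (kract_linear c')).
by apply: eq_tlift => b h; rewrite kract_tmul (@Defs.compA _ _ (acat A)).
Qed.

Lemma bractM z x w y v (c : A w y) (c' : A y v) (t : btensor A z x w) :
  bract c' (bract c t) = bract (kcomp A c c') t.
Proof.
rewrite [bract c t]/bract (tlift_comp (bract_linear c')).
by apply: eq_tlift => l r; rewrite bract_tmul (@Defs.compA _ _ (acat A)).
Qed.

Lemma bract_linear_act z x w y a (c c' : A w y) (t : btensor A z x w) :
  bract (a *: c + c') t = a *: bract c t + bract c' t.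
Proof.
rewrite /bract -tlift_linear_fun; apply: eq_tlift => l r.
by rewrite comp_linr /btmul tmulDr.
Qed.

(* The coinvariance of b is what makes (a b) (x) a' and a (x) (b a') have the
   same image. *)
Lemma canp_bal z x y : balanced z x y (fun a a' => kract a' (rho A a)).
Proof.
split=> [c a a' r|c a r r'|[b coinv_b] a r /=].
- by rewrite rho_lin kract_linear.
- rewrite -tlift_linear_fun; apply: eq_tlift => a0 a1.
  by rewrite comp_linr ktmulDl.
- have rho_b (a0 : A z x) (a1 : H z x) :
      tlift (fun b0 b1 => ktmul (kcomp A a0 b0) (kcomp H a1 b1)) (ktmul b (idm H x))
      = ktmul (kcomp A a0 b) a1.
    rewrite tlift_tmul ?comp1r //.
    by apply: bilinear_bal => *; rewrite ?comp_linl ?comp_linr ?ktmulDl ?ktmulDr.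
  by rewrite rho_comp coinv_b (eq_tlift _ rho_b) kractM.
Qed.

Lemma canp_tmul z x y (a : A z x) (a' : A x y) :
  canp A z x y (btmul a a') = kract a' (rho A a).
Proof. exact: tlift_tmul (canp_bal z x y) _ _. Qed.

Lemma canp_linear z x y : linear (canp A z x y).
Proof. exact: tlift_is_linear (canp_bal z x y). Qed.

Lemma canp_tmul1 z x (a : A z x) : canp A z x x (btmul a (idm A x)) = rho A a.
Proof.
by rewrite canp_tmul -[RHS]tlift_tmul_id; apply: eq_tlift => a0 a1; rewrite comp1r.
Qed.

Lemma canp_bract z x w y (c : A w y) (t : btensor A z x w) :
  canp A z x y (bract c t) = kract c (canp A z x w t).
Proof.
rewrite /bract (tlift_comp (@canp_linear z x y)).
rewrite [RHS](tlift_comp (kract_linear c)).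
by apply: eq_tlift => l r; rewrite canp_tmul kractM.
Qed.

Section TranslationMap.
Variables (z x : X) (gam : H z x -> btensor A z x z).
Hypothesis canp_gam : forall h, canp A z x z (gam h) = ktmul (idm A z) h.

Lemma canp_bract_gam y (b : A z y) h : canp A z x y (bract b (gam h)) = ktmul b h.
Proof. by rewrite canp_bract canp_gam kract_tmul comp1l. Qed.

Lemma canp_gam_rho (a : A z x) :
  canp A z x x (tlift (fun a0 a1 => bract a0 (gam a1)) (rho A a))
  = canp A z x x (btmul a (idm A x)).
Proof.
rewrite canp_tmul1 (tlift_comp (@canp_linear z x x)) -[RHS]tlift_tmul_id.
by apply: eq_tlift => a0 a1; rewrite canp_bract_gam.
Qed.

Hypothesis gam_linear : linear gam.
Hypothesis gam_rho : forall a : A z x,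
  tlift (fun a0 a1 => bract a0 (gam a1)) (rho A a) = btmul a (idm A x).

Definition canp_inv {y : X} : ktensor (A z y) (H z x) -> btensor A z x y :=
  tlift (fun b h => bract b (gam h)).

Lemma canp_inv_bal y :
  bal_bilinear (fun (_ : unit) (b : A z y) => b) (fun (_ : unit) (h : H z x) => h)
    (fun b h => bract b (gam h)).
Proof.
apply: bilinear_bal => *; first exact: bract_linear_act.
by rewrite gam_linear bract_linear.
Qed.

Lemma canp_inv_linear (y : X) : linear (@canp_inv y).
Proof. exact: tlift_is_linear (@canp_inv_bal y). Qed.

Lemma canp_inv_tmul y (b : A z y) h : canp_inv (ktmul b h) = bract b (gam h).
Proof. exact: tlift_tmul (@canp_inv_bal y) _ _. Qed.

Lemma canp_inv_kract y v (c : A y v) (t : ktensor (A z y) (H z x)) :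
  canp_inv (kract c t) = bract c (canp_inv t).
Proof.
rewrite /kract (tlift_comp (@canp_inv_linear v)).
rewrite [RHS](tlift_comp (bract_linear c)).
by apply: eq_tlift => b h; rewrite canp_inv_tmul bractM.
Qed.

Lemma canpK y : cancel (canp A z x y) canp_inv.
Proof.
move=> t; rewrite (tlift_comp (@canp_inv_linear y)) -[RHS]tlift_tmul_id.
apply: eq_tlift => a a'.
by rewrite canp_inv_kract [@canp_inv x _]gam_rho bract_tmul comp1l.
Qed.

Lemma canp_invK y : cancel canp_inv (canp A z x y).
Proof.
move=> t; rewrite (tlift_comp (@canp_linear z x y)) -[RHS]tlift_tmul_id.
by apply: eq_tlift => b h; rewrite canp_bract_gam.
Qed.

End TranslationMap.

End GaloisMap.

Unset Implicit Arguments.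

Theorem theorem3p12 (k : comPzRingType) (X : Type) (H : semiHopfCat k X)
    (A : comodCat H) :
  [<-> (* (1) *)
       (forall x y z : X, bijective (canp A z x y));
       (* (2) *)
       (forall x z : X,
          bijective (canp A z x z) /\
          exists g : ktensor (A z x) (H z x) -> btensor A z x x,
            cancel (canp A z x x) g);
       (* (3) *)
       (forall x z : X,
          exists gam : H z x -> btensor A z x z,
            (forall (c : k) (h h' : H z x), gam (c *: h + h') = c *: gam h + gam h')
            /\ (forall h : H z x, canp A z x z (gam h) = ktmul (idm A z) h)
            /\ (forall a : A z x,
                  tlift (fun (a0 : A z x) (a1 : H z x) =>
                           tlift (fun (l : A z x) (r : A x z) =>
                                    btmul (A := A) l (kcomp A r a0)) (gam a1))
                        (rho A a)
                  = btmul (A := A) a (idm A x)))].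
Proof.
tfae.
- move=> can_bij x z; split; first exact: can_bij.
  by case: (can_bij x x z) => g gK _; exists g.
- move=> can_bij x z; have [[g canK gK] [g' canK']] := can_bij x z.
  have g_linear : linear g.
    by move=> c u v; apply: (can_inj canK); rewrite canp_linear !gK.
  exists (fun h => g (ktmul (idm A z) h)); split.
    by move=> c h h'; rewrite ktmulDr g_linear.
  split=> [h | a]; first exact: gK.
  by apply: (can_inj canK'); apply: canp_gam_rho.
- move=> gamP x y z; have [gam [gam_linear [canp_gam gam_rho]]] := gamP x z.
  by exists (canp_inv gam); [exact: canpK | exact: canp_invK].
Qed.
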